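(* Let $D$ be an integral domain with field of fractions $K$ and let $A$ be a $D$-algebra with standard assumptions. Assume that $A$ is an integral $D$-algebra of bounded degree $n$, i.e. every $a\in A$ satisfies $\mu_a(a)=0$ for some monic $\mu_a\in D[X]$ of degree $n$. Then $\textnormal{Int}_K(M_n(D)) \subseteq \textnormal{Int}_K(A)$, where $M_n(D)$ is the $D$-algebra of $n\times n$ matrices over $D$.
   Context: A $D$-algebra $A$ (not necessarily commutative) satisfies the standard assumptions if it is torsion-free as a $D$-module and $A\cap K = D$, where $A$ and $K$ are identified with their images in $B=K\otimes_D A$ via $a\mapsto 1\otimes a$ and $k\mapsto k\otimes 1$. Polynomials in $K[X]$ are evaluated at elements of $A$ inside $B$. $\textnormal{Int}_K(A)=\{f\in K[X]\mid f(A)\subseteq A\}$. An integral algebra of bounded degree $n$ is one in which each element satisfies a monic polynomial with coefficients in $D$ of degree at most $n$ (equivalently, after multiplying by a power of $X$, of degree exactly $n$). *)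

From HB Require Import structures.
From mathcomp Require Import all_boot all_order all_algebra.
Set Implicit Arguments. Unset Strict Implicit. Unset Printing Implicit Defensive.
Import Order.TTheory GRing.Theory Num.Theory.
Local Open Scope ring_scope.

(* K = field of fractions of D, realised as {fraction D}; D -> K is tofrac. *)
Notation fracD D := (@FracField.tofrac D).

Definition peval (K : fieldType) (B : algType K) (f : {poly K}) (x : B) : B :=
  \sum_(i < size f) f`_i *: x ^+ i.

Definition mxeval (K : fieldType) (n : nat) (f : {poly K}) (M : 'M[K]_n)
  : 'M[K]_n := \sum_(i < size f) f`_i *: M ^+ i.

(* A D-algebra A satisfying the standard assumptions, presented inside
   B = K (x)_D A: B is a K-algebra, A is a subset of B which is a subring
   stable under multiplication by (the image of) D, B = K.A, and A cap K = D. *)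
Definition standard_assumptions (D : idomainType) (B : algType {fraction D})
    (A : B -> Prop) : Prop :=
  [/\ A 1,
      (forall x y, A x -> A y -> A (x - y)) &
      (forall x y, A x -> A y -> A (x * y))] /\
  (forall (d : D) x, A x -> A (fracD D d *: x)) /\
  (* B = K (x)_D A: every element of B is (1/d) a with d in D \ 0, a in A *)
  (forall b : B, exists d : D, d != 0 /\ A (fracD D d *: b)) /\
  (forall k : {fraction D}, A (k%:A) -> exists d : D, k = fracD D d).

Definition IntK (D : idomainType) (B : algType {fraction D}) (A : B -> Prop)
    (f : {poly {fraction D}}) : Prop :=
  forall a, A a -> A (peval f a).

Definition IntK_Mn (D : idomainType) (n : nat) (f : {poly {fraction D}}) : Prop :=
  forall M : 'M[D]_n, exists N : 'M[D]_n,
    mxeval f (map_mx (fracD D) M) = map_mx (fracD D) N.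

Definition integral_bounded_degree (D : idomainType) (B : algType {fraction D})
    (A : B -> Prop) (n : nat) : Prop :=
  forall a, A a -> exists mu : {poly D},
    [/\ mu \is monic, size mu = n.+1 & peval (map_poly (fracD D) mu) a = 0].

From HB Require Import structures.
From mathcomp Require Import all_boot all_order all_algebra.
Import GRing.Theory.
Local Open Scope ring_scope.

(* Let f be in Int_K(M_n(D)) and a in A with monic mu of degree n over D
   killing a; write f = q mu + r with deg r < n.  Then f(a) = r(a), so it
   suffices that r has coefficients in D.  The companion matrix C of mu lies
   in M_n(D) and mu(C) = 0 by Cayley-Hamilton, so f(C) = r(C) is in M_n(D);
   but the first row of C^i is the i-th unit vector for i < n, hence the
   first row of r(C) lists the coefficients of r. *)

Section Evaluation.
Context {K : fieldType}.

Lemma peval_horner_alg (B : algType K) (f : {poly K}) (x : B) :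
  peval f x = horner_alg x f.
Proof.
rewrite /peval /horner_alg /horner_morph /= horner_coef size_map_poly.
by apply: eq_bigr => i _; rewrite coef_map /= mulr_algl.
Qed.

Lemma peval_modp {B : algType K} {p : {poly K}} {x : B} :
  peval p x = 0 -> forall f, peval f x = peval (f %% p) x.
Proof.
move=> px0 f; rewrite !peval_horner_alg in px0 *.
by rewrite {1}(divp_eq f p) rmorphD rmorphM /= px0 mulr0 add0r.
Qed.

Lemma mxeval_horner_mx m (M : 'M[K]_m.+1) (f : {poly K}) :
  mxeval f M = horner_mx M f.
Proof.
rewrite /mxeval /horner_mx /horner_morph /= horner_coef size_map_poly.
by apply: eq_bigr => i _; rewrite coef_map /= -mul_scalar_mx.
Qed.

Lemma mxeval_modp_char_poly m (M : 'M[K]_m.+1) (f : {poly K}) :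
  mxeval f M = mxeval (f %% char_poly M) M.
Proof.
(* On 'M_m.+1, [mxeval] is [peval] in the matrix algebra. *)
apply: peval_modp.
by rewrite -[peval _ _]/(mxeval _ M) mxeval_horner_mx Cayley_Hamilton.
Qed.

End Evaluation.

(* [companionmx p] with its dimension (size p).-1 turned into a parameter, so
   that it can be used at type 'M_d for any d provably equal to (size p).-1. *)
Definition companion {R : nzRingType} d (p : {poly R}) : 'M[R]_d :=
  \matrix_(i < d, j < d)
    if i == d.-1 :> nat then - p`_j else (i.+1 == j :> nat)%:R.

Lemma char_poly_companion (R : comNzRingType) d (p : {poly R}) :
  p \is monic -> (size p).-1 = d -> char_poly (companion d p) = p.
Proof. by move=> p_monic <-; exact: companionmxK. Qed.

Lemma map_companion (R S : nzRingType) (phi : {rmorphism R -> S}) d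
    (p : {poly R}) :
  map_mx phi (companion d p) = companion d (map_poly phi p).
Proof.
apply/matrixP => i j; rewrite !mxE (fun_if phi) rmorphN coef_map.
by rewrite rmorph_nat.
Qed.

Lemma companion_exp_row0 (R : nzRingType) d (p : {poly R}) i (k : 'I_d.+1) :
  (i < d.+1)%N -> (companion d.+1 p ^+ i) 0 k = (i == k :> nat)%:R.
Proof.
elim: i k => [|i IHi] k lt_i1d; first by rewrite expr0 !mxE.
have lt_id : (i < d.+1)%N by apply: ltnW.
rewrite exprSr mxE (bigD1 (Ordinal lt_id)) //= IHi // eqxx mul1r big1.
  rewrite addr0 mxE /= ifF ?rmorph_nat //.
  by apply/negbTE; rewrite neq_ltn -ltnS lt_i1d.
move=> l; rewrite -val_eqE /= IHi // eq_sym => /negPf ->.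
by rewrite mul0r.
Qed.

Lemma mxeval_companion_row0 {K : fieldType} d (p r : {poly K}) (j : 'I_d.+1) :
  (size r <= d.+1)%N -> mxeval r (companion d.+1 p) 0 j = r`_j.
Proof.
move=> size_r; rewrite /mxeval summxE.
under eq_bigr => i _.
  rewrite mxE companion_exp_row0 ?(leq_trans (ltn_ord i)) // mulr_natr mulrb.
  over.
rewrite -big_mkcond /= big_ord1_eq.
by case: ltnP => // ge_j_r; rewrite nth_default.
Qed.

Section IntegerValued.
Context {D : idomainType}.
Local Notation tf := (@FracField.tofrac D).

Lemma coef_modp_IntK_Mn n (f : {poly {fraction D}}) (mu : {poly D}) :
  IntK_Mn n f -> mu \is monic -> size mu = n.+1 ->
  forall j, exists d, (f %% map_poly tf mu)`_j = tf d.
Proof.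
move=> f_int mu_monic size_mu j.
set muK := map_poly tf mu.
have size_muK : size muK = n.+1.
  by rewrite size_map_poly_id0 // (monicP mu_monic) rmorph1 oner_neq0.
have size_r : (size (f %% muK)%R <= n)%N.
  by rewrite -ltnS -size_muK ltn_modp monic_neq0 ?monic_map.
case: (ltnP j n) => [lt_jn | ge_jn]; last first.
  by exists 0; rewrite tofrac0 nth_default // (leq_trans size_r).
case: n f_int size_mu size_muK size_r lt_jn => // m f_int size_mu size_muK
  size_r lt_jm.
have [N f_C] := f_int (companion m.+1 mu).
have char_CK : char_poly (companion m.+1 muK) = muK.
  by rewrite char_poly_companion ?monic_map // size_muK.
exists (N 0 (Ordinal lt_jm)).
rewrite -(mxeval_companion_row0 m muK _ (Ordinal lt_jm) size_r) -{1}char_CK.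
by rewrite -mxeval_modp_char_poly -map_companion f_C mxE.
Qed.

Context {B : algType {fraction D}} {A : B -> Prop}.
Hypothesis A_std : standard_assumptions A.

Lemma peval_closed (f : {poly {fraction D}}) a :
  (forall i, exists d, f`_i = tf d) -> A a -> A (peval f a).
Proof.
have [[A1 AB AM] [AZ _]] := A_std.
move=> f_D Aa.
have A0 : A 0 by rewrite -(subrr 1); apply: (AB).
have AD x y : A x -> A y -> A (x + y).
  by move=> Ax Ay; rewrite -[y]opprK -[- y]sub0r; apply: (AB) => //; apply: (AB).
have Aexp i : A (a ^+ i).
  by elim: i => [|i IHi]; rewrite ?expr0 // exprS; apply: (AM).
apply: (big_ind A) => // i _.
by have [d ->] := f_D i; apply: (AZ).
Qed.

End IntegerValued.

Theorem mainTheorem1 (D : idomainType) (B : algType {fraction D})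
    (A : B -> Prop) (n : nat) :
  standard_assumptions A ->
  integral_bounded_degree A n ->
  forall f : {poly {fraction D}}, IntK_Mn n f -> IntK A f.
Proof.
move=> A_std A_int f f_int a Aa.
have [mu [mu_monic size_mu mu_a]] := A_int a Aa.
rewrite (peval_modp mu_a).
apply: peval_closed => //.
exact: coef_modp_IntK_Mn f_int mu_monic size_mu.
Qed.
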